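(* Let $p\in(0,1)$, $\gamma>0$, $B>0$, $w\in\mathbb{N}$, for each $N\in\mathbb{N}$ let $(\xi_j^{(N)*})_{j=1}^N$ be the unique maximizer of $\mathcal{T}_N$, and let $B^{(N)}=B-\sum_{i=1}^N\xi_i^{(N)*}$. Then $(B^{(N)})_{N\ge1}$ is strictly decreasing in $N$.
   Context: Logarithms are base 2. For an admissible (nonnegative, with sum at most $B$) sequence $(x_j)_{j\ge1}$, $$\mathcal{T}_\infty(x_1,x_2,\dots)=\sum_{k=1}^{w}p^2(1-p)^{k-1}\frac{k}{2}\log_2\!\Big(1+\gamma\frac{B}{k}\Big)+\sum_{j=1}^{\infty}p(1-p)^{j+w-1}\frac12\log_2(1+\gamma x_j)+\sum_{k=1}^{\infty}p^2(1-p)^{k+w-1}\frac{w}{2}\log_2\!\Big(1+\gamma\frac{B-\sum_{j=1}^{k}x_j}{w}\Big).$$ For $N\in\mathbb{N}$ and $\xi_1,\dots,\xi_N\ge0$ with $\sum_{j=1}^N\xi_j\le B$, define $\mathcal{T}_N(\xi_1,\dots,\xi_N)=\mathcal{T}_\infty(\xi_1,\dots,\xi_N,0,0,\dots)$. $\mathcal{T}_N$ has a unique maximizer over this compact set, denoted $(\xi_j^{(N)*})_{j=1}^N$. *)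

From Stdlib Require Import Reals Lra Lia.
From Coquelicot Require Import Coquelicot.
Open Scope R_scope.

Definition log2 (x : R) : R := ln x / ln 2.

(* fsum f n = f 1 + ... + f n  (1-based finite sum; fsum f 0 = 0) *)
Fixpoint fsum (f : nat -> R) (n : nat) : R :=
  match n with
  | O => 0
  | S m => fsum f m + f (S m)
  end.

(* T_infinity; sequences are 1-based: x j for j >= 1 (x 0 is ignored). *)
Definition T_inf (p gamma B : R) (w : nat) (x : nat -> R) : R :=
  fsum (fun k => p ^ 2 * (1 - p) ^ (k - 1) * (INR k / 2)
                 * log2 (1 + gamma * (B / INR k))) w
  + Series (fun n => let j := S n in
             p * (1 - p) ^ (j + w - 1) * (1 / 2) * log2 (1 + gamma * x j))
  + Series (fun n => let k := S n in
             p ^ 2 * (1 - p) ^ (k + w - 1) * (INR w / 2)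
             * log2 (1 + gamma * ((B - fsum x k) / INR w))).

Definition trunc (N : nat) (xi : nat -> R) : nat -> R :=
  fun j => if (j <=? N)%nat then xi j else 0.

Definition T_N (p gamma B : R) (w N : nat) (xi : nat -> R) : R :=
  T_inf p gamma B w (trunc N xi).

Definition feasible (B : R) (N : nat) (xi : nat -> R) : Prop :=
  (forall j, (1 <= j <= N)%nat -> 0 <= xi j) /\ fsum xi N <= B.

(* xi is the unique maximizer of T_N over the feasible set
   (uniqueness on the coordinates 1..N, the only ones T_N depends on). *)
Definition is_unique_maximizer (p gamma B : R) (w N : nat) (xi : nat -> R) : Prop :=
  feasible B N xi /\
  (forall y, feasible B N y -> T_N p gamma B w N y <= T_N p gamma B w N xi) /\
  (forall y, feasible B N y -> T_N p gamma B w N xi <= T_N p gamma B w N y ->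
     forall j, (1 <= j <= N)%nat -> y j = xi j).

From Stdlib Require Import Reals Lra Lia.
From Coquelicot Require Import Coquelicot.
Open Scope R_scope.

(** The allocation is described by the remaining budgets [r k = B - (x 1 + ... + x k)],
    in which [T_N] is a constant plus [objective].  One-sided first-order conditions at the
    maximiser show that it keeps a positive final budget, spends a positive amount at every
    step, and balances marginal capacities:
    [u (x k) = (1 - p) u (x (k+1)) + p v (r k)] for [k < N] and [u (x N) = v (r N)],
    where [u] and [v] are strictly decreasing.  If the final budget for [N + 1] steps were
    at least the one for [N] steps, a backward induction along these relations would make
    both the budget [r k] and the spending [x k] strictly larger for [N + 1] steps at every
    [k >= 1], hence [r 0] strictly larger too, contradicting [r 0 = B] in both cases. *)

Lemma fsum_ext (f g : nat -> R) n :
  (forall j, (1 <= j <= n)%nat -> f j = g j) -> fsum f n = fsum g n.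
Proof.
  induction n as [|n IH]; intros Hfg; simpl; [reflexivity|].
  rewrite IH by (intros; apply Hfg; lia). rewrite Hfg by lia. reflexivity.
Qed.

Lemma fsum_eq0 (f : nat -> R) n :
  (forall j, (1 <= j <= n)%nat -> f j = 0) -> fsum f n = 0.
Proof.
  induction n as [|n IH]; intros Hf; simpl; [reflexivity|].
  rewrite IH by (intros; apply Hf; lia). rewrite Hf by lia. ring.
Qed.

Lemma fsum_single (f : nat -> R) n k :
  (1 <= k <= n)%nat -> (forall j, (1 <= j <= n)%nat -> j <> k -> f j = 0) ->
  fsum f n = f k.
Proof.
  induction n as [|n IH]; intros Hk Hf; [lia|]. simpl.
  destruct (Nat.eq_dec k (S n)) as [->|Hne].
  - rewrite fsum_eq0 by (intros; apply Hf; lia). ring.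
  - rewrite IH, (Hf (S n)) by (try lia; intros; apply Hf; lia). ring.
Qed.

Lemma fsum_pair (f : nat -> R) n k :
  (1 <= k)%nat -> (S k <= n)%nat ->
  (forall j, (1 <= j <= n)%nat -> j <> k -> j <> S k -> f j = 0) ->
  fsum f n = f k + f (S k).
Proof.
  induction n as [|n IH]; intros Hk Hkn Hf; [lia|]. simpl.
  destruct (Nat.eq_dec k n) as [->|Hne].
  - rewrite (fsum_single f n n) by (try lia; intros; apply Hf; lia). reflexivity.
  - rewrite IH, (Hf (S n)) by (try lia; intros; apply Hf; lia). ring.
Qed.

Lemma fsum_scal (f : nat -> R) c n : fsum (fun j => c * f j) n = c * fsum f n.
Proof. induction n as [|n IH]; simpl; [ring|]. rewrite IH. ring. Qed.

Lemma fsum_le (f g : nat -> R) n :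
  (forall j, (1 <= j <= n)%nat -> f j <= g j) -> fsum f n <= fsum g n.
Proof.
  induction n as [|n IH]; intros Hfg; simpl; [lra|].
  assert (fsum f n <= fsum g n) by (apply IH; intros; apply Hfg; lia).
  assert (f (S n) <= g (S n)) by (apply Hfg; lia). lra.
Qed.

Lemma fsum_S_l (f : nat -> R) n : fsum f (S n) = f 1%nat + fsum (fun k => f (S k)) n.
Proof. induction n as [|n IH]; simpl in *; [ring|]. rewrite IH. ring. Qed.

Lemma fsum_trunc (x : nat -> R) n k : fsum (trunc n x) k = fsum x (Nat.min k n).
Proof.
  induction k as [|k IH]; [reflexivity|]. cbn [fsum]. rewrite IH. unfold trunc.
  destruct (Nat.leb_spec (S k) n).
  - replace (Nat.min (S k) n) with (S k) by lia. replace (Nat.min k n) with k by lia.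
    reflexivity.
  - replace (Nat.min (S k) n) with n by lia. replace (Nat.min k n) with n by lia. ring.
Qed.

Lemma is_series_eventually_geom (a : nat -> R) m c q :
  Rabs q < 1 -> (forall k, a (m + k)%nat = c * q ^ k) ->
  is_series a (fsum (fun k => a (pred k)) m + c / (1 - q)).
Proof.
  revert a. induction m as [|m IH]; intros a Hq Ha.
  - rewrite Rplus_0_l.
    apply (is_series_ext (fun k => c * q ^ k)); [intros k; exact (eq_sym (Ha k))|].
    apply (is_series_scal_l c (fun k => q ^ k)). now apply is_series_geom.
  - apply is_series_decr_1.
    replace (plus _ _) with (fsum (fun k => a (S (pred k))) m + c / (1 - q)).
    + exact (IH (fun k => a (S k)) Hq Ha).
    + rewrite fsum_S_l. unfold plus, opp; simpl.
      rewrite (fsum_ext (fun k => a (S (pred k))) (fun k => a k)); [ring|].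
      intros [|j] Hj; [lia|reflexivity].
Qed.

(** * The objective in terms of the remaining budgets *)

Definition alpha (p : R) (w j : nat) : R := p * (1 - p) ^ (j + w - 1).
Definition cap (gamma y : R) : R := 1 / 2 * log2 (1 + gamma * y).
Definition capw (gamma : R) (w : nat) (y : R) : R :=
  INR w / 2 * log2 (1 + gamma * (y / INR w)).
Definition spent (r : nat -> R) (j : nat) : R := r (j - 1)%nat - r j.
Definition resid (B : R) (x : nat -> R) (k : nat) : R := B - fsum x k.

(* [r k] is the budget left after step [k]; beyond step [n] the budget stays at [r n],
   so the third series of [T_inf] has a geometric tail summing to the last term. *)
Definition objective (p gamma : R) (w n : nat) (r : nat -> R) : R :=
  fsum (fun j => alpha p w j * cap gamma (spent r j)) n
  + fsum (fun k => p * alpha p w k * capw gamma w (r k)) (n - 1)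
  + alpha p w n * capw gamma w (r n).

Lemma spent_S (r : nat -> R) k : spent r (S k) = r k - r (S k).
Proof. unfold spent. now rewrite Nat.sub_succ, Nat.sub_0_r. Qed.

Lemma spent_resid B x j : (1 <= j)%nat -> spent (resid B x) j = x j.
Proof.
  intros Hj. destruct j as [|j]; [lia|]. rewrite spent_S. unfold resid. simpl. ring.
Qed.

Lemma fsum_spent (r : nat -> R) k : fsum (spent r) k = r 0%nat - r k.
Proof.
  induction k as [|k IH]; cbn [fsum]; [ring|]. rewrite IH, spent_S. ring.
Qed.

Lemma objective_ext p gamma w n (r1 r2 : nat -> R) :
  (forall k, (k <= n)%nat -> r1 k = r2 k) ->
  objective p gamma w n r1 = objective p gamma w n r2.
Proof.
  intros E. unfold objective, spent.
  rewrite (fsum_ext (fun j => _ * cap _ (r1 _ - r1 j)) (fun j => _ * cap _ (r2 (j - 1)%nat - r2 j)))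
    by (intros; rewrite !E by lia; reflexivity).
  rewrite (fsum_ext (fun k => _ * capw _ _ (r1 k)) (fun k => _ * capw _ _ (r2 k)))
    by (intros; rewrite E by lia; reflexivity).
  rewrite E by lia. reflexivity.
Qed.

Definition T_head (p gamma B : R) (w : nat) : R :=
  fsum (fun k => p ^ 2 * (1 - p) ^ (k - 1) * (INR k / 2) * log2 (1 + gamma * (B / INR k))) w.

Lemma T_N_objective p gamma B w n x : 0 < p < 1 -> (1 <= n)%nat ->
  T_N p gamma B w n x = T_head p gamma B w + objective p gamma w n (resid B x).
Proof.
  intros Hp Hn. unfold T_N, T_inf, objective, T_head.
  assert (Hq : Rabs (1 - p) < 1) by (rewrite Rabs_pos_eq; lra).
  set (u := fun i : nat => let j := S i in
          p * (1 - p) ^ (j + w - 1) * (1 / 2) * log2 (1 + gamma * trunc n x j)).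
  set (v := fun i : nat => let k := S i in
          p ^ 2 * (1 - p) ^ (k + w - 1) * (INR w / 2) *
          log2 (1 + gamma * ((B - fsum (trunc n x) k) / INR w))).
  set (L := p ^ 2 * (1 - p) ^ (n + w - 1) * (INR w / 2) *
          log2 (1 + gamma * ((B - fsum x n) / INR w))).
  assert (Hu : is_series u (fsum (fun k => u (pred k)) n + 0 / (1 - (1 - p)))).
  { apply is_series_eventually_geom; [exact Hq|]. intros k. unfold u, trunc.
    destruct (Nat.leb_spec (S (n + k)) n); [lia|].
    rewrite Rmult_0_r, Rplus_0_r. unfold log2. rewrite ln_1. unfold Rdiv. ring. }
  assert (Hv : is_series v (fsum (fun k => v (pred k)) (n - 1) + L / (1 - (1 - p)))).
  { apply is_series_eventually_geom; [exact Hq|]. intros k. unfold v, L.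
    rewrite fsum_trunc. replace (Nat.min (S (n - 1 + k)) n) with n by lia.
    replace (S (n - 1 + k) + w - 1)%nat with ((n + w - 1) + k)%nat by lia.
    rewrite pow_add. ring. }
  rewrite (is_series_unique _ _ Hu), (is_series_unique _ _ Hv).
  rewrite (fsum_ext (fun k => u (pred k)) (fun j => alpha p w j * cap gamma (spent (resid B x) j))).
  2:{ intros j Hj. rewrite spent_resid by lia. unfold u, alpha, cap, trunc.
      replace (S (pred j)) with j by lia. destruct (Nat.leb_spec j n); [ring|lia]. }
  rewrite (fsum_ext (fun k => v (pred k)) (fun k => p * alpha p w k * capw gamma w (resid B x k))).
  2:{ intros j Hj. unfold v, alpha, capw, resid. replace (S (pred j)) with j by lia.
      rewrite fsum_trunc. replace (Nat.min j n) with j by lia. ring. }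
  unfold L, alpha, capw, resid. field. lra.
Qed.

Definition admissible (B : R) (n : nat) (r : nat -> R) : Prop :=
  r 0%nat = B /\ (forall j, (1 <= j <= n)%nat -> r j <= r (j - 1)%nat) /\ 0 <= r n.

Definition bump (k : nat) (s : R) (i : nat) : R := if (i =? k)%nat then s else 0.
Definition shift_from (i : nat) (s : R) (k : nat) : R := if (i <=? k)%nat then s else 0.

Lemma admissible_antitone B n r :
  admissible B n r -> forall i k, (i <= k <= n)%nat -> r k <= r i.
Proof.
  intros [_ [Hdec _]] i k [Hik Hkn]. induction Hik as [|k Hik IH]; [lra|].
  pose proof (Hdec (S k) ltac:(lia)) as Hstep. rewrite Nat.sub_succ, Nat.sub_0_r in Hstep.
  assert (r k <= r i) by (apply IH; lia). lra.
Qed.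

Lemma admissible_nonneg B n r : admissible B n r -> forall k, (k <= n)%nat -> 0 <= r k.
Proof.
  intros Hr k Hk. pose proof (admissible_antitone B n r Hr k n ltac:(lia)).
  destruct Hr as [_ [_ Hn]]. lra.
Qed.

Lemma admissible_bump B n r k s e :
  admissible B n r -> (1 <= k <= n)%nat ->
  r k + e * s <= r (k - 1)%nat -> ((k < n)%nat -> r (S k) <= r k + e * s) ->
  (k = n -> 0 <= r n + e * s) -> admissible B n (fun i => r i + e * bump k s i).
Proof.
  intros [H0 [Hdec Hn]] Hk Hprev Hnext Hlast. unfold bump. split; [|split].
  - destruct (Nat.eqb_spec 0 k); [lia|]. rewrite H0. ring.
  - intros j Hj. pose proof (Hdec j Hj).
    destruct (Nat.eqb_spec j k); destruct (Nat.eqb_spec (j - 1) k); try lia.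
    + subst j. lra.
    + replace j with (S k) by lia. rewrite Nat.sub_succ, Nat.sub_0_r.
      specialize (Hnext ltac:(lia)). lra.
    + lra.
  - destruct (Nat.eqb_spec n k); [apply Hlast; lia|lra].
Qed.

Lemma admissible_shift_from B n r i s e :
  admissible B n r -> (1 <= i <= n)%nat ->
  r i + e * s <= r (i - 1)%nat -> 0 <= r n + e * s ->
  admissible B n (fun k => r k + e * shift_from i s k).
Proof.
  intros [H0 [Hdec Hn]] Hi Hprev Hlast. unfold shift_from. split; [|split].
  - destruct (Nat.leb_spec i 0); [lia|]. rewrite H0. ring.
  - intros j Hj. pose proof (Hdec j Hj).
    destruct (Nat.leb_spec i j); destruct (Nat.leb_spec i (j - 1)); try lia; try lra.
    replace j with i by lia. lra.
  - destruct (Nat.leb_spec i n); [lra|lia].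
Qed.

(** * Directional derivatives of the objective *)

Definition marg (gamma y : R) : R := / (1 + gamma * y).
Definition cap_slope (gamma : R) : R := gamma / (2 * ln 2).

Lemma cap_slope_pos gamma : 0 < gamma -> 0 < cap_slope gamma.
Proof. intros. unfold cap_slope. pose proof ln_lt_2. apply Rdiv_lt_0_compat; lra. Qed.

Lemma is_derive_fsum (h : nat -> R -> R) (dh : nat -> R) n x :
  (forall j, (1 <= j <= n)%nat -> is_derive (h j) x (dh j)) ->
  is_derive (fun e => fsum (fun j => h j e) n) x (fsum dh n).
Proof.
  induction n as [|n IH]; intros Hh; simpl.
  - apply (is_derive_const (V := R_NormedModule)).
  - apply (is_derive_plus (V := R_NormedModule)); [apply IH; intros j Hj|]; apply Hh; lia.
Qed.

Lemma is_derive_cap gamma a y t : 0 < 1 + gamma * y ->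
  is_derive (fun e => a * cap gamma (y + e * t)) 0 (cap_slope gamma * (a * t * marg gamma y)).
Proof.
  intros Hy. unfold cap, log2, cap_slope, marg. pose proof ln_lt_2.
  auto_derive; rewrite Rmult_0_l, Rplus_0_r; [lra|]. field. lra.
Qed.

Lemma is_derive_capw gamma w a y t : 0 < INR w -> 0 < 1 + gamma / INR w * y ->
  is_derive (fun e => a * capw gamma w (y + e * t)) 0
    (cap_slope gamma * (a * t * marg (gamma / INR w) y)).
Proof.
  intros Hw Hy. unfold capw, log2, cap_slope, marg. pose proof ln_lt_2.
  assert (E : INR w + gamma * y = INR w * (1 + gamma / INR w * y)) by (field; lra).
  auto_derive; rewrite Rmult_0_l, Rplus_0_r; [lra|]. field. rewrite E. nra.
Qed.

Lemma is_derive_right_max_nonpos (phi : R -> R) x l delta :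
  is_derive phi x l -> 0 < delta -> (forall e, 0 < e < delta -> phi (x + e) <= phi x) ->
  l <= 0.
Proof.
  intros Hd Hdelta Hmax. apply is_derive_Reals in Hd.
  destruct (Rle_or_lt l 0) as [|Hl]; [assumption|]. exfalso.
  destruct (Hd l Hl) as [eps Heps].
  set (h := Rmin eps delta / 2).
  assert (Hh : 0 < h < delta /\ h < eps).
  { pose proof (cond_pos eps). pose proof (Rmin_l eps delta). pose proof (Rmin_r eps delta).
    pose proof (Rmin_glb_lt eps delta 0 ltac:(lra) ltac:(lra)). unfold h. lra. }
  specialize (Heps h ltac:(lra) ltac:(rewrite Rabs_pos_eq; lra)).
  specialize (Hmax h ltac:(lra)).
  apply Rabs_def2 in Heps. destruct Heps as [_ Hlow].
  assert ((phi (x + h) - phi x) / h <= 0).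
  { unfold Rdiv. assert (0 < / h) by (apply Rinv_0_lt_compat; lra). nra. }
  lra.
Qed.

Definition dobjective (p gamma : R) (w n : nat) (r d : nat -> R) : R :=
  fsum (fun j => alpha p w j * spent d j * marg gamma (spent r j)) n
  + fsum (fun k => p * alpha p w k * d k * marg (gamma / INR w) (r k)) (n - 1)
  + alpha p w n * d n * marg (gamma / INR w) (r n).

Lemma is_derive_objective p gamma B w n r d : 0 < gamma -> (1 <= w)%nat ->
  admissible B n r ->
  is_derive (fun e => objective p gamma w n (fun k => r k + e * d k)) 0
    (cap_slope gamma * dobjective p gamma w n r d).
Proof.
  intros Hg Hw Hr.
  assert (HW : 0 < INR w) by (apply lt_0_INR; lia).
  assert (Hdiv : forall k, (k <= n)%nat -> 0 < 1 + gamma / INR w * r k).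
  { intros k Hk. pose proof (admissible_nonneg B n r Hr k Hk).
    assert (0 < gamma / INR w) by (apply Rdiv_lt_0_compat; lra). nra. }
  destruct Hr as [_ [Hdec _]].
  unfold objective, dobjective. rewrite !Rmult_plus_distr_l, <- !fsum_scal.
  apply (is_derive_plus (V := R_NormedModule)); [apply (is_derive_plus (V := R_NormedModule))|].
  - apply (is_derive_fsum (fun j e => alpha p w j * cap gamma (spent (fun k => r k + e * d k) j))).
    intros j Hj. apply (is_derive_ext (fun e => alpha p w j * cap gamma (spent r j + e * spent d j))).
    + intros e. unfold spent. do 2 f_equal. ring.
    + apply is_derive_cap. pose proof (Hdec j Hj). unfold spent. nra.
  - apply (is_derive_fsum (fun k e => p * alpha p w k * capw gamma w (r k + e * d k))).
    intros k Hk. apply is_derive_capw; [exact HW|]. apply Hdiv. lia.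
  - apply is_derive_capw; [exact HW|]. apply Hdiv. lia.
Qed.

Lemma marg_0 gamma : marg gamma 0 = 1.
Proof. unfold marg. rewrite Rmult_0_r, Rplus_0_r. apply Rinv_1. Qed.

Lemma marg_le_contravar gamma y1 y2 : 0 < gamma -> 0 <= y1 -> y1 <= y2 ->
  marg gamma y2 <= marg gamma y1.
Proof. intros. unfold marg. apply Rinv_le_contravar; nra. Qed.

Lemma marg_lt_contravar gamma y1 y2 : 0 < gamma -> 0 <= y1 -> y1 < y2 ->
  marg gamma y2 < marg gamma y1.
Proof. intros. unfold marg. apply Rinv_0_lt_contravar; nra. Qed.

Lemma marg_lt_contravar_inv gamma y1 y2 : 0 < gamma -> 0 <= y1 ->
  marg gamma y1 < marg gamma y2 -> y2 < y1.
Proof.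
  intros Hg Hy1 Hlt. destruct (Rle_or_lt y1 y2) as [Hle|]; [|assumption].
  pose proof (marg_le_contravar gamma y1 y2 Hg Hy1 Hle). lra.
Qed.

Lemma marg_le_1 gamma y : 0 < gamma -> 0 <= y -> marg gamma y <= 1.
Proof. intros. rewrite <- (marg_0 gamma). now apply marg_le_contravar; [|lra|]. Qed.

Lemma marg_lt_1 gamma y : 0 < gamma -> 0 < y -> marg gamma y < 1.
Proof. intros. rewrite <- (marg_0 gamma). now apply marg_lt_contravar; [|lra|]. Qed.

Lemma alpha_pos p w k : 0 < p < 1 -> 0 < alpha p w k.
Proof. intros. unfold alpha. apply Rmult_lt_0_compat; [lra|]. apply pow_lt. lra. Qed.

Lemma alpha_succ p w k : (1 <= w)%nat -> alpha p w (S k) = (1 - p) * alpha p w k.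
Proof.
  intros. unfold alpha. replace (S k + w - 1)%nat with (S (k + w - 1)) by lia. simpl. ring.
Qed.

(* The geometric weights telescope: [p * alpha k = alpha k - alpha (S k)]. *)
Lemma alpha_tail p w i n : (1 <= w)%nat -> (1 <= i <= n)%nat ->
  fsum (fun k => if (i <=? k)%nat then p * alpha p w k else 0) (n - 1) + alpha p w n
  = alpha p w i.
Proof.
  intros Hw Hi. replace n with (i + (n - i))%nat by lia. generalize (n - i)%nat as m.
  induction m as [|m IH].
  - rewrite fsum_eq0, Nat.add_0_r; [ring|].
    intros j Hj. destruct (Nat.leb_spec i j); [lia|reflexivity].
  - replace (i + S m - 1)%nat with (S (i + m - 1)) by lia. cbn [fsum].
    replace (S (i + m - 1)) with (i + m)%nat by lia.
    destruct (Nat.leb_spec i (i + m)); [|lia].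
    rewrite Nat.add_succ_r, alpha_succ, <- IH by exact Hw. ring.
Qed.

Lemma dobjective_bump p gamma w n r k s : (1 <= w)%nat -> (1 <= k)%nat -> (S k <= n)%nat ->
  dobjective p gamma w n r (bump k s) =
  s * alpha p w k * ((1 - p) * marg gamma (spent r (S k))
                     + p * marg (gamma / INR w) (r k) - marg gamma (spent r k)).
Proof.
  intros Hw Hk Hkn. unfold dobjective.
  rewrite (fsum_pair _ n k) by (try lia; intros j Hj Hjk HjSk; unfold spent, bump;
    destruct (Nat.eqb_spec (j - 1) k); destruct (Nat.eqb_spec j k); try lia; ring).
  rewrite (fsum_single _ (n - 1) k) by (try lia; intros j Hj Hjk; unfold bump;
    destruct (Nat.eqb_spec j k); try lia; ring).
  rewrite alpha_succ by exact Hw. unfold spent, bump. rewrite Nat.sub_succ, Nat.sub_0_r.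
  destruct (Nat.eqb_spec (k - 1) k); [lia|]. destruct (Nat.eqb_spec k k); [|lia].
  destruct (Nat.eqb_spec (S k) k); [lia|]. destruct (Nat.eqb_spec n k); [lia|]. ring.
Qed.

Lemma dobjective_bump_last p gamma w n r s : (1 <= n)%nat ->
  dobjective p gamma w n r (bump n s) =
  s * alpha p w n * (marg (gamma / INR w) (r n) - marg gamma (spent r n)).
Proof.
  intros Hn. unfold dobjective.
  rewrite (fsum_single _ n n) by (try lia; intros j Hj Hjn; unfold spent, bump;
    destruct (Nat.eqb_spec (j - 1) n); destruct (Nat.eqb_spec j n); try lia; ring).
  rewrite fsum_eq0 by (intros j Hj; unfold bump; destruct (Nat.eqb_spec j n); try lia; ring).
  unfold spent, bump. destruct (Nat.eqb_spec (n - 1) n); [lia|].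
  destruct (Nat.eqb_spec n n); [ring|lia].
Qed.

Lemma dobjective_shift_from p gamma w n r i s : (1 <= i <= n)%nat ->
  dobjective p gamma w n r (shift_from i s) =
  s * (fsum (fun k => if (i <=? k)%nat then p * alpha p w k * marg (gamma / INR w) (r k) else 0)
         (n - 1)
       + alpha p w n * marg (gamma / INR w) (r n) - alpha p w i * marg gamma (spent r i)).
Proof.
  intros Hi. unfold dobjective.
  rewrite (fsum_single _ n i) by (try lia; intros j Hj Hji; unfold spent, shift_from;
    destruct (Nat.leb_spec i (j - 1)); destruct (Nat.leb_spec i j); try lia; ring).
  rewrite (fsum_ext (fun k => _ * shift_from i s k * _)
    (fun k => s * (if (i <=? k)%nat then p * alpha p w k * marg (gamma / INR w) (r k) else 0)))
    by (intros k Hk; unfold shift_from; destruct (Nat.leb_spec i k); ring).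
  rewrite fsum_scal.
  unfold spent, shift_from. destruct (Nat.leb_spec i (i - 1)); [lia|].
  destruct (Nat.leb_spec i i); [|lia]. destruct (Nat.leb_spec i n); [ring|lia].
Qed.

(** * First-order conditions and the comparison argument *)

Lemma exists_sign_change (r : nat -> R) n : 0 < r 0%nat -> r n <= 0 ->
  exists i, (1 <= i <= n)%nat /\ 0 < r (i - 1)%nat /\ r i <= 0.
Proof.
  induction n as [|n IH]; intros H0 Hn; [lra|].
  destruct (Rlt_or_le 0 (r n)) as [Hpos|Hnonpos].
  - exists (S n). rewrite Nat.sub_succ, Nat.sub_0_r. split; [lia|auto].
  - destruct (IH H0 Hnonpos) as [i [Hi Hri]]. exists i. split; [lia|exact Hri].
Qed.

Lemma nat_down_ind (P : nat -> Prop) N :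
  P N -> (forall k, (1 <= k)%nat -> (S k <= N)%nat -> P (S k) -> P k) ->
  forall k, (1 <= k <= N)%nat -> P k.
Proof.
  intros HN Hstep.
  assert (Hdown : forall m, (m < N)%nat -> P (N - m)%nat).
  { induction m as [|m IH]; intros Hm; [now rewrite Nat.sub_0_r|].
    apply Hstep; [lia|lia|]. replace (S (N - S m)) with (N - m)%nat by lia. apply IH; lia. }
  intros k Hk. replace k with (N - (N - k))%nat by lia. apply Hdown; lia.
Qed.

Section Optimality.

Variables (p gamma B : R) (w : nat).
Hypotheses (hp : 0 < p < 1) (hg : 0 < gamma) (hw : (1 <= w)%nat).

Definition optimal (n : nat) (r : nat -> R) : Prop :=
  admissible B n r /\
  forall r', admissible B n r' -> objective p gamma w n r' <= objective p gamma w n r.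

Lemma gamma_w_pos : 0 < gamma / INR w.
Proof. apply Rdiv_lt_0_compat; [exact hg|]. apply lt_0_INR. lia. Qed.

Lemma optimal_dobjective_nonpos n r d delta :
  optimal n r -> 0 < delta ->
  (forall e, 0 < e < delta -> admissible B n (fun k => r k + e * d k)) ->
  dobjective p gamma w n r d <= 0.
Proof.
  intros [Hr Hopt] Hdelta Hadm.
  assert (Hslope : cap_slope gamma * dobjective p gamma w n r d <= 0).
  { apply (is_derive_right_max_nonpos (fun e => objective p gamma w n (fun k => r k + e * d k))
             0 _ delta); [now apply is_derive_objective with B|exact Hdelta|].
    intros e He. rewrite Rplus_0_l, (objective_ext _ _ _ _ (fun k => r k + 0 * d k) r)
      by (intros; ring).
    apply Hopt, Hadm, He. }
  pose proof (cap_slope_pos gamma hg). nra.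
Qed.

Lemma optimal_last_pos n r : 0 < B -> (1 <= n)%nat -> optimal n r -> 0 < r n.
Proof.
  intros HB Hn Hopt. destruct (Rlt_or_le 0 (r n)) as [|Hle]; [assumption|exfalso].
  pose proof Hopt as [Hr _]. pose proof Hr as [H0 [Hdec _]].
  destruct (exists_sign_change r n ltac:(lra) Hle) as [i [Hi [Hprev Hri]]].
  assert (Hzero : forall k, (i <= k <= n)%nat -> r k = 0).
  { intros k Hk. pose proof (admissible_antitone B n r Hr i k Hk).
    pose proof (admissible_nonneg B n r Hr k ltac:(lia)). lra. }
  assert (HD : dobjective p gamma w n r (shift_from i 1) <= 0).
  { apply (optimal_dobjective_nonpos _ _ _ (spent r i)); [exact Hopt|unfold spent; lra|].
    intros e He. apply admissible_shift_from; [exact Hr|exact Hi|unfold spent in He; lra|].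
    rewrite (Hzero n) by lia. lra. }
  rewrite dobjective_shift_from, (Hzero n), marg_0 in HD by lia.
  rewrite (fsum_ext _ (fun k => if (i <=? k)%nat then p * alpha p w k else 0)) in HD
    by (intros k Hk; destruct (Nat.leb_spec i k); [rewrite (Hzero k), marg_0 by lia|]; ring).
  rewrite Rmult_1_r, alpha_tail in HD by (exact hw || exact Hi).
  pose proof (marg_lt_1 gamma (spent r i) hg ltac:(unfold spent; lra)).
  pose proof (alpha_pos p w i hp). nra.
Qed.

Lemma optimal_spent_pos n r : optimal n r -> 0 < r n ->
  forall j, (1 <= j <= n)%nat -> 0 < spent r j.
Proof.
  intros Hopt Hrn j Hj. pose proof Hopt as [Hr _]. pose proof Hr as [_ [Hdec _]].
  pose proof (Hdec j Hj). unfold spent.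
  destruct (Rlt_or_le 0 (r (j - 1)%nat - r j)) as [|Hle]; [assumption|exfalso].
  assert (Hzero : spent r j = 0) by (unfold spent; lra).
  assert (HD : dobjective p gamma w n r (shift_from j (-1)) <= 0).
  { apply (optimal_dobjective_nonpos _ _ _ (r n)); [exact Hopt|exact Hrn|].
    intros e He. apply admissible_shift_from; [exact Hr|exact Hj|lra|lra]. }
  rewrite dobjective_shift_from, Hzero, marg_0 in HD by exact Hj.
  set (v := marg (gamma / INR w) (r n)) in HD.
  assert (Hsum : fsum (fun k => if (j <=? k)%nat then p * alpha p w k * marg (gamma / INR w) (r k)
                                else 0) (n - 1)
                 <= v * fsum (fun k => if (j <=? k)%nat then p * alpha p w k else 0) (n - 1)).
  { rewrite <- fsum_scal. apply fsum_le. intros k Hk. destruct (Nat.leb_spec j k); [|lra].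
    pose proof (admissible_antitone B n r Hr k n ltac:(lia)) as Hrk.
    pose proof (marg_le_contravar _ _ _ gamma_w_pos (Rlt_le _ _ Hrn) Hrk) as Hv.
    assert (0 < p * alpha p w k) by (apply Rmult_lt_0_compat; [apply hp|apply alpha_pos, hp]).
    fold v in Hv. nra. }
  pose proof (alpha_tail p w j n hw Hj) as Htail.
  pose proof (marg_lt_1 _ _ gamma_w_pos Hrn) as Hv. fold v in Hv.
  pose proof (alpha_pos p w j hp). pose proof (alpha_pos p w n hp). nra.
Qed.

Lemma optimal_balance_le n r k : (1 <= k)%nat -> (S k <= n)%nat -> optimal n r ->
  (1 - p) * marg gamma (spent r (S k)) + p * marg (gamma / INR w) (r k) <= marg gamma (spent r k).
Proof.
  intros Hk Hkn Hopt. pose proof Hopt as [Hr _]. pose proof Hr as [_ [Hdec _]].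
  pose proof (admissible_nonneg B n r Hr k ltac:(lia)) as Hrk.
  pose proof (admissible_antitone B n r Hr k (S k) ltac:(lia)) as Hnext.
  destruct (Rlt_or_le 0 (spent r k)) as [Hpos|Hnonpos].
  - assert (HD : dobjective p gamma w n r (bump k 1) <= 0).
    { apply (optimal_dobjective_nonpos _ _ _ (spent r k)); [exact Hopt|exact Hpos|].
      intros e He. unfold spent in He. apply admissible_bump; [exact Hr|lia|lra|lra|lia]. }
    rewrite dobjective_bump in HD by (exact hw || lia).
    pose proof (alpha_pos p w k hp). nra.
  - pose proof (Hdec k ltac:(lia)). replace (spent r k) with 0 by (unfold spent in *; lra).
    rewrite marg_0.
    pose proof (marg_le_1 gamma (spent r (S k)) hg ltac:(rewrite spent_S; lra)).
    pose proof (marg_le_1 _ _ gamma_w_pos Hrk). nra.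
Qed.

Lemma optimal_balance_ge n r k : (1 <= k)%nat -> (S k <= n)%nat -> optimal n r ->
  0 < spent r (S k) ->
  marg gamma (spent r k) <= (1 - p) * marg gamma (spent r (S k)) + p * marg (gamma / INR w) (r k).
Proof.
  intros Hk Hkn Hopt Hpos. pose proof Hopt as [Hr _]. pose proof Hr as [_ [Hdec _]].
  pose proof (Hdec k ltac:(lia)).
  assert (HD : dobjective p gamma w n r (bump k (-1)) <= 0).
  { apply (optimal_dobjective_nonpos _ _ _ (spent r (S k))); [exact Hopt|exact Hpos|].
    intros e He. rewrite spent_S in He.
    apply admissible_bump; [exact Hr|lia|lra|lra|lia]. }
  rewrite dobjective_bump in HD by (exact hw || lia).
  pose proof (alpha_pos p w k hp). nra.
Qed.

Lemma optimal_last_le n r : (1 <= n)%nat -> optimal n r ->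
  marg (gamma / INR w) (r n) <= marg gamma (spent r n).
Proof.
  intros Hn Hopt. pose proof Hopt as [Hr _]. pose proof Hr as [_ [Hdec Hrn]].
  destruct (Rlt_or_le 0 (spent r n)) as [Hpos|Hnonpos].
  - assert (HD : dobjective p gamma w n r (bump n 1) <= 0).
    { apply (optimal_dobjective_nonpos _ _ _ (spent r n)); [exact Hopt|exact Hpos|].
      intros e He. unfold spent in He. apply admissible_bump; [exact Hr|lia|lra|lia|lra]. }
    rewrite dobjective_bump_last in HD by exact Hn.
    pose proof (alpha_pos p w n hp). nra.
  - pose proof (Hdec n ltac:(lia)). replace (spent r n) with 0 by (unfold spent in *; lra).
    rewrite marg_0. exact (marg_le_1 _ _ gamma_w_pos Hrn).
Qed.

Lemma optimal_last_ge n r : (1 <= n)%nat -> optimal n r -> 0 < r n ->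
  marg gamma (spent r n) <= marg (gamma / INR w) (r n).
Proof.
  intros Hn Hopt Hrn. pose proof Hopt as [Hr _]. pose proof Hr as [_ [Hdec _]].
  pose proof (Hdec n ltac:(lia)).
  assert (HD : dobjective p gamma w n r (bump n (-1)) <= 0).
  { apply (optimal_dobjective_nonpos _ _ _ (r n)); [exact Hopt|exact Hrn|].
    intros e He. apply admissible_bump; [exact Hr|lia|lra|lia|lra]. }
  rewrite dobjective_bump_last in HD by exact Hn.
  pose proof (alpha_pos p w n hp). nra.
Qed.

Lemma optimal_comparison_base N A C : 0 < B -> (1 <= N)%nat ->
  optimal N A -> optimal (S N) C -> A N <= C (S N) ->
  A N < C N /\ marg gamma (spent C N) < marg gamma (spent A N).
Proof.
  intros HB HN HoA HoC Hle. pose proof HoA as [HA _].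
  pose proof (admissible_nonneg B N A HA N ltac:(lia)) as HAN.
  pose proof (optimal_last_pos (S N) C HB ltac:(lia) HoC) as HCpos.
  pose proof (optimal_spent_pos (S N) C HoC HCpos (S N) ltac:(lia)) as Hspent.
  rewrite spent_S in Hspent.
  assert (HlastC : marg gamma (spent C (S N)) <= marg (gamma / INR w) (A N)).
  { eapply Rle_trans; [now apply optimal_last_ge; [lia| |]|].
    now apply marg_le_contravar; [apply gamma_w_pos| |]. }
  pose proof (optimal_balance_ge (S N) C N HN ltac:(lia) HoC ltac:(rewrite spent_S; lra))
    as HbalC.
  pose proof (optimal_last_le N A HN HoA) as HlastA.
  pose proof (marg_lt_contravar _ (A N) (C N) gamma_w_pos HAN ltac:(lra)) as HvN.
  split; [lra|]. destruct hp. nra.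
Qed.

Lemma optimal_comparison_step N A C k : optimal N A -> optimal (S N) C ->
  (1 <= k)%nat -> (S k <= N)%nat ->
  A (S k) < C (S k) /\ marg gamma (spent C (S k)) < marg gamma (spent A (S k)) ->
  A k < C k /\ marg gamma (spent C k) < marg gamma (spent A k).
Proof.
  intros HoA HoC Hk HkN [Hlt Hmarg]. pose proof HoA as [HA _]. pose proof HoC as [HC _].
  pose proof (admissible_antitone B N A HA k (S k) ltac:(lia)) as HspentA.
  pose proof (admissible_antitone B (S N) C HC k (S k) ltac:(lia)) as HspentC.
  pose proof (marg_lt_contravar_inv gamma (spent C (S k)) _ hg ltac:(rewrite spent_S; lra) Hmarg)
    as Hspent.
  rewrite !spent_S in Hspent.
  pose proof (optimal_balance_ge (S N) C k Hk ltac:(lia) HoC ltac:(rewrite spent_S; lra))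
    as HbalC.
  pose proof (optimal_balance_le N A k Hk HkN HoA) as HbalA.
  pose proof (marg_lt_contravar _ (A k) (C k) gamma_w_pos
    (admissible_nonneg B N A HA k ltac:(lia)) ltac:(lra)) as Hv.
  split; [lra|]. destruct hp. nra.
Qed.

Lemma optimal_last_resid_lt N A C : 0 < B -> (1 <= N)%nat ->
  optimal N A -> optimal (S N) C -> C (S N) < A N.
Proof.
  intros HB HN HoA HoC. destruct (Rlt_or_le (C (S N)) (A N)) as [|Hle]; [assumption|exfalso].
  destruct (nat_down_ind
              (fun k => A k < C k /\ marg gamma (spent C k) < marg gamma (spent A k)) N
              (optimal_comparison_base N A C HB HN HoA HoC Hle)
              (fun k => optimal_comparison_step N A C k HoA HoC) 1 ltac:(lia))
    as [Hlt Hmarg].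
  pose proof HoA as [[HA0 _] _]. pose proof HoC as [[HC0 [HdecC _]] _].
  pose proof (HdecC 1%nat ltac:(lia)) as HspentC.
  pose proof (marg_lt_contravar_inv gamma (spent C 1) _ hg ltac:(unfold spent; lra) Hmarg).
  unfold spent in *. simpl in *. lra.
Qed.

End Optimality.

Lemma unique_maximizer_optimal p gamma B w n x : 0 < p < 1 -> (1 <= n)%nat ->
  is_unique_maximizer p gamma B w n x -> optimal p gamma B w n (resid B x).
Proof.
  intros Hp Hn [[Hx Hsum] [Hmax _]]. split; [split; [|split]|].
  - unfold resid. simpl. ring.
  - intros j Hj. pose proof (spent_resid B x j ltac:(lia)). pose proof (Hx j Hj).
    unfold spent in *. lra.
  - unfold resid. lra.
  - intros r' [H0 [Hdec Hn']].
    assert (Hfeas : feasible B n (spent r')).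
    { split.
      - intros j Hj. pose proof (Hdec j Hj). unfold spent. lra.
      - rewrite fsum_spent. lra. }
    pose proof (Hmax _ Hfeas) as Hle. rewrite !T_N_objective in Hle by first [exact Hp | exact Hn].
    rewrite (objective_ext p gamma w n r' (resid B (spent r'))); [lra|].
    intros k Hk. unfold resid. rewrite fsum_spent. lra.
Qed.

Theorem lemma8 (p gamma B : R) (w : nat) (xs : nat -> nat -> R)
  (hp : 0 < p < 1) (hg : 0 < gamma) (hB : 0 < B) (hw : (1 <= w)%nat)
  (hmax : forall N : nat, (1 <= N)%nat -> is_unique_maximizer p gamma B w N (xs N)) :
  forall N : nat, (1 <= N)%nat ->
    B - fsum (xs (S N)) (S N) < B - fsum (xs N) N.
Proof.
  intros N HN.
  apply (optimal_last_resid_lt p gamma B w hp hg hw N (resid B (xs N)) (resid B (xs (S N))) hB HN).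
  all: apply unique_maximizer_optimal; [exact hp | lia | apply hmax; lia].
Qed.
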